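(* Let $n \geq 2$ be an integer, let $p(x) \in \mathcal{T}_n$, and let $r = \deg \mathrm{Min}(p,x)$, where $1 \leq r \leq n$. Let $q(x) \in \mathcal{J}(p(x))$ and let $f(x) = q(x)/\gcd(p(x),p'(x)) \in \mathbb{Z}[x]$. Then there exist nonnegative real numbers $\gamma_1, \dots, \gamma_r$ such that \[ \mathrm{coeff}(f(x-1)) = \sum_{j=1}^r \gamma_j \cdot \mathrm{coeff}(\mathrm{Min}_j(p, x-1)). \]
   Context: A nonzero real polynomial is real-rooted if all its complex roots are real. For $n\ge1$, a Seidel trace polynomial of degree $n$ is a real-rooted polynomial $p(x)=\sum_{i=0}^n a_i x^{n-i}\in\mathbb{Z}[x]$ of degree $n$ with $a_0=1$, $a_1=0$, and $a_2=-\binom{n}{2}$ if $n\ge2$; $\mathcal{T}_n$ is the set of these. For real-rooted $p,q$ with $\deg p = m$, $\deg q = m-1$, roots $\lambda_1\le\dots\le\lambda_m$ of $p$ and $\mu_1\le\dots\le\mu_{m-1}$ of $q$, we say $q$ interlaces $p$ if $\lambda_i \le \mu_i \le \lambda_{i+1}$ for all $i$. For $p\in\mathcal{T}_n$, $\mathcal{J}(p(x))$ is the set of integer polynomials $q(x)$ of degree $n-1$ with $q\in\mathcal{T}_{n-1}$ and $q$ interlacing $p$. Here $\gcd(p(x),p'(x))$ is the monic gcd and $\mathrm{Min}(p,x) := p(x)/\gcd(p(x),p'(x))$. Writing $\mathrm{Min}(p,x) = \prod_{i=1}^r (x-\lambda_i)$ with $\lambda_1<\dots<\lambda_r$, define $\mathrm{Min}_j(p,x)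 := \prod_{1\le i\le r,\, i\ne j}(x-\lambda_i)$ for $j\in\{1,\dots,r\}$, and $\mathrm{Min}_j(p,x-1)$ is obtained by substituting $x-1$ for $x$. For a nonzero polynomial $g(x)$ of degree $m$, $\mathrm{coeff}(g)\in\mathbb{R}^{m+1}$ is its coefficient vector, whose $i$th entry is the coefficient of $x^{m-i+1}$ in $g(x)$. *)

From mathcomp Require Import all_boot all_order all_algebra.
From mathcomp Require Import reals.
From mathcomp.real_closed Require Import complex.
Set Implicit Arguments. Unset Strict Implicit. Unset Printing Implicit Defensive.
Import Order.TTheory GRing.Theory Num.Theory.
Local Open Scope ring_scope.

Definition real_rooted (R : rcfType) (p : {poly R}) : Prop :=
  p != 0 /\
  forall z : R[i], root (map_poly (real_complex R) p) z -> Im z = 0.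

Definition polyR (R : rcfType) (p : {poly int}) : {poly R} := map_poly intr p.

(* Seidel trace polynomial of degree n (p = sum_i a_i x^(n-i)) *)
Definition seidel_trace (R : rcfType) (n : nat) (p : {poly int}) : Prop :=
  (1 <= n)%N /\ size p = n.+1 /\
  p`_n = 1 /\
  p`_(n.-1) = 0 /\
  ((2 <= n)%N -> p`_(n - 2) = - ('C(n, 2))%:Z) /\
  real_rooted (polyR R p).

Definition interlaces (R : rcfType) (p q : {poly R}) : Prop :=
  exists (s t : seq R),
    sorted <=%R s /\ sorted <=%R t /\
    size s = (size p).-1 /\ size t = (size s).-1 /\
    p = lead_coef p *: \prod_(x <- s) ('X - x%:P) /\
    q = lead_coef q *: \prod_(x <- t) ('X - x%:P) /\
    (forall i, (i < size t)%N -> s`_i <= t`_i /\ t`_i <= s`_i.+1).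

Definition in_J (R : rcfType) (n : nat) (p q : {poly int}) : Prop :=
  seidel_trace R n.-1 q /\ interlaces (polyR R p) (polyR R q).

Definition mgcdp (R : rcfType) (p q : {poly R}) : {poly R} :=
  (lead_coef (gcdp p q))^-1 *: gcdp p q.

Definition Minp (R : rcfType) (p : {poly R}) : {poly R} :=
  p %/ mgcdp p p^`().

(* Min_j given the strictly increasing list lam of roots of Min(p,x) *)
Definition Minj (R : rcfType) (lam : seq R) (j : nat) : {poly R} :=
  \prod_(i < size lam | i != j :> nat) ('X - (lam`_i)%:P).

Definition shift1 (R : rcfType) (g : {poly R}) : {poly R} := g \Po ('X - 1).

Definition coeffv (R : rcfType) (g : {poly R}) : seq R := rev g.

(* Write p = prod (x - s_i) and q = prod (x - t_i), the roots s of p and t of q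
   interlacing.  A root of p of multiplicity m is a root of gcd(p, p') of
   multiplicity m - 1, so p = Min(p) g with g = prod (x - u_k).  Interlacing lets a
   root of p lose at most one unit of multiplicity in q, hence g divides q and
   f = q / g = prod (x - w_k) has degree r - 1; it is integral by Gauss's lemma.
   Lagrange interpolation at the roots lambda_j of Min(p) gives
   f = sum_j f(lambda_j) / Min_j(lambda_j) Min_j, and x |-> x - 1 acts linearly on
   coefficient vectors.  The weights are nonnegative: if f(lambda_j) <> 0, then
   lambda_j has multiplicity in q exactly one less than in p, so interlacing puts
   as many roots of q as of p above lambda_j; cancelling the roots u_k, f and Min_j
   have equally many roots above lambda_j, i.e. f(lambda_j) and Min_j(lambda_j)
   have the same sign. *)

From mathcomp Require Import all_boot all_order all_algebra.
From mathcomp Require Import reals.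
From mathcomp.real_closed Require Import complex.
From mathcomp Require Import zify ring.
From mathcomp.real_closed Require polyorder.
Import Order.TTheory GRing.Theory Num.Theory.
Set Implicit Arguments. Unset Strict Implicit. Unset Printing Implicit Defensive.
Local Open Scope ring_scope.

Definition interlacing (R : numDomainType) (s t : seq R) : Prop :=
  size s = (size t).+1 /\
  forall i, (i < size t)%N -> s`_i <= t`_i /\ t`_i <= s`_i.+1.

Section InterlacingCounts.
Variable R : numDomainType.
Implicit Types (a : R) (s t u v : seq R).

Lemma count_le_pointwise (P : pred R) u v :
  (forall x y, x <= y -> P x -> P y) -> size u = size v ->
  (forall i, (i < size u)%N -> u`_i <= v`_i) -> (count P u <= count P v)%N.
Proof.
move=> Pup; elim: u v => [|x u IHu] [|y v] //= [Esz] le_uv.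
apply: leq_add; last by apply: IHu => // i; apply: (le_uv i.+1).
by have := Pup x y (le_uv 0%N isT); case: (P x) => [->|].
Qed.

Lemma count_ge_split a v :
  count (>= a) v = (count (> a) v + count_mem a v)%N.
Proof.
elim: v => //= x v ->; rewrite le_eqVlt (eq_sym x).
by case: eqP => [->|_]; rewrite ?ltxx /= add0n; [exact: addnCA | exact: addnA].
Qed.

Lemma interlacing_count_gt a s t :
  interlacing s t -> (count (> a) t <= count (> a) s)%N.
Proof.
case=> Esz le_st; apply: (@leq_trans (count (> a) (behead s))).
  apply: count_le_pointwise => [x y xy ax | | i it].
  - exact: lt_le_trans ax xy.
  - by rewrite size_behead Esz.
  - by rewrite nth_behead; case: (le_st i it).
by case: s {Esz le_st} => //= x s; apply: leq_addl.
Qed.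

Lemma interlacing_count_ge a s t :
  interlacing s t -> (count (>= a) s <= (count (>= a) t).+1)%N.
Proof.
case=> Esz le_st; rewrite -(cat_take_drop (size t) s) count_cat -addn1.
apply: leq_add.
  apply: count_le_pointwise => [x y xy ax | | i].
  - exact: le_trans ax xy.
  - by rewrite size_takel // Esz.
  - by rewrite size_takel ?Esz // => it; rewrite nth_take //; case: (le_st i it).
by apply: leq_trans (count_size _ _) _; rewrite size_drop Esz subSnn.
Qed.

Lemma interlacing_count_mem a s t :
  interlacing s t -> (count_mem a s <= (count_mem a t).+1)%N.
Proof.
move=> st; have := interlacing_count_gt a st; have := interlacing_count_ge a st.
rewrite !count_ge_split; lia.
Qed.

Lemma interlacing_count_gt_eq a s t : interlacing s t ->
  count_mem a s = (count_mem a t).+1 -> count (> a) t = count (> a) s.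
Proof.
move=> st; have := interlacing_count_gt a st; have := interlacing_count_ge a st.
rewrite !count_ge_split; lia.
Qed.

End InterlacingCounts.

Lemma interlacing_split_size (R : numDomainType) (s t lam u w : seq R) :
  interlacing s t -> perm_eq s (lam ++ u) -> perm_eq t (u ++ w) ->
  (size w).+1 = size lam.
Proof.
case=> szst _ /perm_size + /perm_size; rewrite !size_cat => sE tE.
rewrite sE tE in szst.
by apply/eqP; rewrite -(eqn_add2r (size u)) szst addSn addnC.
Qed.

Lemma count_mem_leq_perm_cat (T : eqType) (u t : seq T) :
  (forall a, count_mem a u <= count_mem a t)%N -> exists w, perm_eq t (u ++ w).
Proof.
elim: u t => [|x u IHu] t le_ut; first by exists t.
have xt : x \in t.
  by rewrite -has_pred1 has_count; apply: leq_trans (le_ut x); rewrite /= eqxx.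
have [|w uw] := IHu (rem x t).
  by move=> a; have := le_ut a; rewrite (permP (perm_to_rem xt)) /=; lia.
by exists w; rewrite (perm_trans (perm_to_rem xt)) // perm_cons.
Qed.

Lemma horner_prod_XsubC_sign_gt0 (R : realDomainType) (a : R) (v : seq R) :
  a \notin v -> 0 < (-1) ^+ count (> a) v * (\prod_(x <- v) ('X - x%:P)).[a].
Proof.
elim: v => [|x v IHv]; first by rewrite big_nil hornerC mulr1.
rewrite inE negb_or big_cons hornerM hornerXsubC /= => /andP[ax /IHv].
rewrite exprD mulrACA; apply: mulr_gt0 => //.
have [xa|xa] := ltP a x; first by rewrite expr1 mulN1r oppr_gt0 subr_lt0.
by rewrite expr0 mul1r subr_gt0 lt_neqAle eq_sym ax xa.
Qed.

Lemma signed_div_gt0 (R : realFieldType) (k : nat) (x y : R) :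
  0 < (-1) ^+ k * x -> 0 < (-1) ^+ k * y -> 0 < x / y.
Proof.
rewrite -signr_odd; case: (odd k); rewrite ?expr1 ?mulN1r ?mul1r; last exact: divr_gt0.
by move=> x0 y0; rewrite -mulrNN -invrN divr_gt0.
Qed.

Lemma interlacing_weight_ge0 (R : realFieldType) (s t lam u w : seq R) (a : R) :
  interlacing s t -> perm_eq s (lam ++ u) -> perm_eq t (u ++ w) ->
  uniq lam -> a \in lam ->
  0 <= (\prod_(x <- w) ('X - x%:P)).[a] / (\prod_(x <- rem a lam) ('X - x%:P)).[a].
Proof.
move=> st slu tuw lam_uniq al; have [aw|aw] := boolP (a \in w).
  have /rootP-> : root (\prod_(x <- w) ('X - x%:P)) a by rewrite root_prod_XsubC.
  by rewrite mul0r.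
have cs : count_mem a s = (count_mem a t).+1.
  rewrite (permP slu) (permP tuw) !count_cat count_uniq_mem // al.
  by rewrite (count_memPn aw) addn0 add1n.
have Erem : count (> a) (rem a lam) = count (> a) lam.
  by rewrite [RHS](permP (perm_to_rem al)) /= ltxx.
have Ew : count (> a) w = count (> a) (rem a lam).
  rewrite Erem; have := interlacing_count_gt_eq st cs.
  by rewrite (permP slu) (permP tuw) !count_cat addnC => /eqP; rewrite eqn_add2r => /eqP.
apply/ltW/(signed_div_gt0 (horner_prod_XsubC_sign_gt0 aw)).
by rewrite Ew horner_prod_XsubC_sign_gt0 // mem_rem_uniqF.
Qed.

Section GcdDerivMultiplicity.
Variable R : numFieldType.
Implicit Types (P Q : {poly R}) (a : R).

Lemma mup_gcdp P Q a : P != 0 -> Q != 0 ->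
  mup a (gcdp P Q) = minn (mup a P) (mup a Q).
Proof.
move=> P0 Q0; have G0 : gcdp P Q != 0 by rewrite gcdp_eq0 negb_and P0.
apply/eqP; rewrite eqn_leq; apply/andP; split.
  by rewrite leq_min !mup_geq // -dvdp_gcd -mup_geq.
by rewrite mup_geq // dvdp_gcd -!mup_geq // -leq_min.
Qed.

Lemma mup_deriv P a : P != 0 -> (0 < mup a P)%N -> mup a P^`() = (mup a P).-1.
Proof.
move=> P0; have [m [Q Qa ->]] := multiplicity_XsubC P a; rewrite P0 /= in Qa.
rewrite mupMr // mup_XsubCX eqxx; case: m => // m _.
set S := Q^`() * ('X - a%:P) + Q *+ m.+1.
have SaN0 : ~~ root S a.
  rewrite /root /S !hornerE subrr mulr0 add0r.
  by rewrite hornerMn -mulr_natr mulf_neq0 // pnatr_eq0.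
have -> : (Q * ('X - a%:P) ^+ m.+1)^`() = S * ('X - a%:P) ^+ m.
  by rewrite derivM deriv_exp derivXsubC /S /= mul1r exprSr; ring.
by rewrite mupMr // mup_XsubCX eqxx.
Qed.

Lemma mup_gcdp_deriv P a : P != 0 -> P^`() != 0 ->
  mup a (gcdp P P^`()) = (mup a P).-1.
Proof.
move=> P0 P'0; rewrite mup_gcdp //.
have [->|m0] := posnP (mup a P); first by rewrite min0n.
by rewrite mup_deriv //; apply/minn_idPr; exact: leq_pred.
Qed.

Lemma eqp_mup P Q a : P %= Q -> mup a P = mup a Q.
Proof.
have [->|Q0] := eqVneq Q 0; first by rewrite eqp0 => /eqP->.
move=> PQ; have P0 : P != 0 by apply: contraNneq Q0 => P0; rewrite -eqp0 eqp_sym -P0.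
apply/eqP; rewrite eqn_leq; apply/andP; split.
- by rewrite mup_geq // -(eqp_dvdr _ PQ) -mup_geq.
- by rewrite mup_geq // (eqp_dvdr _ PQ) -mup_geq.
Qed.

End GcdDerivMultiplicity.

Section MonicGcdDeriv.
Variable R : rcfType.
Implicit Types (P : {poly R}) (s : seq R).

Lemma mgcdp_eqp P Q : mgcdp P Q %= gcdp P Q.
Proof.
rewrite /mgcdp; have [->|G0] := eqVneq (gcdp P Q) 0; first by rewrite scaler0 eqpxx.
by rewrite eqp_scale // invr_eq0 lead_coef_eq0.
Qed.

Lemma mgcdp_monic P Q : P != 0 -> mgcdp P Q \is monic.
Proof.
move=> P0; have G0 : gcdp P Q != 0 by rewrite gcdp_eq0 negb_and P0.
by apply/monicP; rewrite lead_coefZ mulVf // lead_coef_eq0.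
Qed.

Lemma Minp_mulK P : Minp P * mgcdp P P^`() = P.
Proof. by rewrite /Minp divpK // (eqp_dvdl _ (mgcdp_eqp _ _)) dvdp_gcdl. Qed.

Lemma mgcdp_deriv_prod_XsubC s : (1 < size s)%N ->
  let P := \prod_(x <- s) ('X - x%:P) in
  exists u, mgcdp P P^`() = \prod_(x <- u) ('X - x%:P) /\
            forall a, count_mem a u = (count_mem a s).-1.
Proof.
move=> s_gt1 P; have Pm : P \is monic by apply: monic_prod_XsubC.
have P0 := monic_neq0 Pm.
have P'0 : P^`() != 0.
  by rewrite -size_poly_gt0 polyorder.size_deriv size_prod_XsubC /= ltnW.
have gP : mgcdp P P^`() %| P by rewrite -[X in _ %| X](Minp_mulK P) dvdp_mulIr.
have [m gm] := dvdp_prod_XsubC gP; exists (mask m s).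
have gE : mgcdp P P^`() = \prod_(x <- mask m s) ('X - x%:P).
  by apply/eqP; rewrite -eqp_monic ?mgcdp_monic ?monic_prod_XsubC.
split=> // a; rewrite -mu_prod_XsubC -gE (eqp_mup _ (mgcdp_eqp _ _)).
by rewrite mup_gcdp_deriv // mu_prod_XsubC.
Qed.

Lemma interlacing_mgcdp_split s t lam :
  interlacing s t -> (1 < size s)%N ->
  let P := \prod_(x <- s) ('X - x%:P) in
  Minp P = \prod_(x <- lam) ('X - x%:P) ->
  exists u w, [/\ mgcdp P P^`() = \prod_(x <- u) ('X - x%:P),
                  perm_eq s (lam ++ u) & perm_eq t (u ++ w)].
Proof.
move=> st s_gt1 P MinpE; have [u [gE cu]] := mgcdp_deriv_prod_XsubC s_gt1.
have [w tw] : exists w, perm_eq t (u ++ w).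
  apply: count_mem_leq_perm_cat => a.
  by rewrite cu -subn1 leq_subLR add1n interlacing_count_mem.
exists u, w; split=> //; apply: prod_XsubC_eq.
by rewrite big_cat /= -MinpE -gE Minp_mulK.
Qed.

End MonicGcdDeriv.

Lemma size_shift1 (R : rcfType) (h : {poly R}) : size (shift1 h) = size h.
Proof. by rewrite /shift1 size_comp_poly2 // -polyC1 size_XsubC. Qed.

Section LagrangeMinj.
Variables (R : rcfType) (lam : seq R).

Lemma Minj_rem j : (j < size lam)%N ->
  Minj lam j = \prod_(x <- rem lam`_j lam) ('X - x%:P).
Proof.
move=> jl; have XN0 : 'X - (lam`_j)%:P != 0 by rewrite polyXsubC_eq0.
apply: (mulfI XN0); transitivity (\prod_(x <- lam) ('X - x%:P)).
  by rewrite (big_nth 0) big_mkord (bigD1 (Ordinal jl)).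
by rewrite (perm_big _ (perm_to_rem (mem_nth 0 jl))) big_cons.
Qed.

Lemma size_Minj j : (j < size lam)%N -> size (Minj lam j) = size lam.
Proof.
move=> jl; rewrite Minj_rem // size_prod_XsubC size_rem ?mem_nth //.
by rewrite prednK // (leq_ltn_trans _ jl).
Qed.

Hypothesis lam_uniq : uniq lam.

Lemma horner_Minj_neq0 j : (j < size lam)%N -> (Minj lam j).[lam`_j] != 0.
Proof. by move=> jl; rewrite Minj_rem // -rootE root_prod_XsubC mem_rem_uniqF. Qed.

Lemma root_Minj i j : (i < size lam)%N -> (j < size lam)%N -> i != j ->
  root (Minj lam j) lam`_i.
Proof.
move=> il jl ij; rewrite Minj_rem // root_prod_XsubC mem_rem_uniq //.
by rewrite inE nth_uniq // ij mem_nth.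
Qed.

Lemma Minj_lagrange (f : {poly R}) : (size f <= size lam)%N ->
  f = \sum_(j < size lam) (f.[lam`_j] / (Minj lam j).[lam`_j]) *: Minj lam j.
Proof.
move=> f_small; set L := \sum_(j < _) _.
have L_small : (size L <= size lam)%N.
  apply: (big_ind (fun p : {poly R} => size p <= size lam)%N) => //.
  - by rewrite size_poly0.
  - by move=> p q pl ql; rewrite (leq_trans (size_polyD _ _)) // geq_max pl.
  - by move=> j _; rewrite (leq_trans (size_scale_leq _ _)) // size_Minj.
have fL_small : (size (f - L)%R <= size lam)%N.
  by rewrite (leq_trans (size_polyD _ _)) // size_polyN geq_max f_small.
have fL_roots : all (root (f - L)) lam.
  apply/allP => _ /(nthP 0)[i il <-].
  rewrite rootE hornerD hornerN horner_sum (bigD1 (Ordinal il)) //= hornerZ.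
  rewrite divfK ?horner_Minj_neq0 // big1 ?addr0 ?subrr // => j ji.
  have ij : i != j by apply: contraNneq ji => ij; apply/eqP/val_inj.
  by rewrite hornerZ (rootP (root_Minj il _ ij)) ?mulr0.
apply/eqP; rewrite -subr_eq0; apply/negPn/negP => fL0.
by have := max_poly_roots fL0 fL_roots lam_uniq; rewrite ltnNge fL_small.
Qed.

Lemma coeffv_shift1_lagrange (f : {poly R}) : size f = size lam ->
  coeffv (shift1 f) =
  [seq \sum_(j < size lam) (f.[lam`_j] / (Minj lam j).[lam`_j]) *
         (coeffv (shift1 (Minj lam j)))`_i | i <- iota 0 (size lam)].
Proof.
move=> szf; have shiftE : shift1 f =
    \sum_(j < size lam) (f.[lam`_j] / (Minj lam j).[lam`_j]) *: shift1 (Minj lam j).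
  rewrite {1}(Minj_lagrange (eq_leq szf)) /shift1 linear_sum.
  by apply: eq_bigr => j _; rewrite linearZ.
rewrite /coeffv -{1}(mkseq_nth 0 (rev (shift1 f))) size_rev size_shift1 szf.
apply/eq_in_map => i; rewrite mem_iota add0n => /andP[_ il].
rewrite nth_rev ?size_shift1 ?szf // shiftE coef_sum; apply: eq_bigr => j _.
by rewrite coefZ nth_rev ?size_shift1 ?size_Minj.
Qed.

End LagrangeMinj.

Local Notation pZtoQ := (map_poly (intr : int -> rat)).

Lemma monic_dvdp_int (h : {poly rat}) (q : {poly int}) :
  h \is monic -> q \is monic -> h %| pZtoQ q -> exists h0 : {poly int}, h = pZtoQ h0.
Proof.
move=> /monicP hm /monicP qm /dvdpP_rat_int[h1 [c _ hE] [r qE]].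
set e := lead_coef h1.
have e2 : e * e = 1.
  have : lead_coef r * e = 1 by rewrite mulrC -lead_coefM -qE.
  move=> /intUnitRing.unitzPl; rewrite qualifE /=.
  by case/orP=> /eqP->.
have ce : c * e%:~R = 1.
  by rewrite -[RHS]hm hE lead_coefZ lead_coef_map_inj //; apply: intr_inj.
have c_e : c = e%:~R.
  by rewrite -[c]mulr1 -[X in c * X]/(1%:~R) -e2 intrM mulrA ce mul1r.
by exists (e *: h1); rewrite hE c_e map_polyZ.
Qed.

Lemma polyR_ratE (R : rcfType) (p : {poly int}) :
  polyR R p = map_poly ratr (pZtoQ p).
Proof. by rewrite /polyR -map_poly_comp; apply: eq_map_poly => x /=; rewrite ratr_int. Qed.

Lemma divp_mgcdp_int (R : rcfType) (p q : {poly int}) :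
  q \is monic -> mgcdp (polyR R p) (polyR R p)^`() %| polyR R q ->
  exists f0 : {poly int},
    polyR R q %/ mgcdp (polyR R p) (polyR R p)^`() = polyR R f0.
Proof.
move=> qm; set pQ := pZtoQ p.
set hQ := (lead_coef (gcdp pQ pQ^`()))^-1 *: gcdp pQ pQ^`().
have -> : mgcdp (polyR R p) (polyR R p)^`() = map_poly ratr hQ.
  by rewrite /mgcdp polyR_ratE deriv_map -gcdp_map lead_coef_map -fmorphV -map_polyZ.
rewrite polyR_ratE dvdp_map -map_divp => hq.
have qQm : pZtoQ q \is monic by apply: monic_map.
have hQ0 : hQ != 0 by apply: contraTneq hq => ->; rewrite dvd0p monic_neq0.
have G0 : gcdp pQ pQ^`() != 0 by apply: contraNneq hQ0 => G0; rewrite /hQ G0 scaler0.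
have hm : hQ \is monic by apply/monicP; rewrite lead_coefZ mulVf ?lead_coef_eq0.
have [|||f0 f0E] := @monic_dvdp_int (pZtoQ q %/ hQ) q => //.
- by rewrite -(monicMr _ hm) divpK.
- by rewrite -[X in _ %| X](divpK hq) dvdp_mulIl.
by exists f0; rewrite f0E -polyR_ratE.
Qed.

Lemma seidel_trace_monic (R : rcfType) n p : seidel_trace R n p -> p \is monic.
Proof. by case=> _ [szp [pn _]]; apply/monicP; rewrite /lead_coef szp. Qed.

Lemma polyR_monic (R : rcfType) (p : {poly int}) : p \is monic -> polyR R p \is monic.
Proof. exact: monic_map. Qed.

Lemma interlaces_monic (R : rcfType) (n : nat) (P Q : {poly R}) :
  P \is monic -> Q \is monic -> (0 < n)%N -> size P = n.+1 -> interlaces P Q ->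
  exists s t, [/\ interlacing s t, size s = n,
                  P = \prod_(x <- s) ('X - x%:P) & Q = \prod_(x <- t) ('X - x%:P)].
Proof.
move=> /monicP Pm /monicP Qm n_gt0 szP [s [t [_ [_ [szs [szt [Ps [Qt st]]]]]]]].
rewrite szP /= in szs; exists s, t; split=> //; last by rewrite {1}Qt Qm scale1r.
  by split=> //; rewrite szt szs prednK.
by rewrite {1}Ps Pm scale1r.
Qed.

Unset Implicit Arguments.

Theorem theorem4p4 (R : realType) (n : nat) (p q : {poly int}) (lam : seq R) :
  (2 <= n)%N ->
  seidel_trace R n p ->
  in_J R n p q ->
  sorted <%R lam ->
  Minp (polyR R p) = \prod_(x <- lam) ('X - x%:P) ->
  let r := size lam in
  let g := mgcdp (polyR R p) (polyR R p)^`() in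
  let f := polyR R q %/ g in
  [/\ g %| polyR R q,
      (exists f0 : {poly int}, f = polyR R f0)
    & exists gamma : nat -> R,
        (forall j, (j < r)%N -> 0 <= gamma j) /\
        coeffv (shift1 f) =
          [seq \sum_(j < r) gamma j * (coeffv (shift1 (Minj lam j)))`_i
          | i <- iota 0 r] ].
Proof.
move=> n_gt1 tp [tq PQ] lam_sorted MinpE r g f.
have szP : size (polyR R p) = n.+1.
  by case: tp => _ [szp _]; rewrite size_map_inj_poly //; apply: intr_inj.
have [s [t [st szs Ps Qt]]] :=
  interlaces_monic (polyR_monic R (seidel_trace_monic tp))
    (polyR_monic R (seidel_trace_monic tq)) (ltnW n_gt1) szP PQ.
have s_gt1 : (1 < size s)%N by rewrite szs.
rewrite Ps in MinpE; have [u [w [gu slu tuw]]] := interlacing_mgcdp_split st s_gt1 MinpE.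
have gE : g = \prod_(x <- u) ('X - x%:P) by rewrite /g Ps.
have QE : polyR R q = g * \prod_(x <- w) ('X - x%:P) by rewrite Qt (perm_big _ tuw) big_cat gE.
have fE : f = \prod_(x <- w) ('X - x%:P).
  by rewrite /f QE mulKp // gE monic_neq0 // monic_prod_XsubC.
have szf : size f = r by rewrite fE size_prod_XsubC (interlacing_split_size st slu tuw).
split; first by rewrite QE dvdp_mulr.
  by apply: divp_mgcdp_int; [exact: seidel_trace_monic tq | rewrite -/g QE dvdp_mulr].
have lam_uniq := lt_sorted_uniq lam_sorted.
exists (fun j => f.[lam`_j] / (Minj lam j).[lam`_j]).
split; last exact: coeffv_shift1_lagrange.
move=> j jr; rewrite fE Minj_rem //.
by apply: interlacing_weight_ge0 st slu tuw lam_uniq _; exact: mem_nth.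
Qed.
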